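(* If $Q$ is a Jordan loop of order $9$ and $x\in Q$ satisfies $\langle x\rangle=Q$, then $Q=\{x^k:1\le k\le 9\}$ and $x^n=x^{(n\bmod 9)}$ for all integers $n\ge 0$.
   Context: A loop is a set $Q$ with a binary operation (juxtaposition) and neutral element $e$ such that for all $a,b$ the equations $ax=b$, $ya=b$ have unique solutions. A Jordan loop is a commutative loop satisfying $x^2(yx)=(x^2y)x$. For $k\ge 0$, $x^k$ denotes the right-associated product $x(x(\cdots(xe)\cdots))$ with $k$ factors $x$ (so $x^0=e$). $\langle x\rangle$ denotes the subloop generated by $x$. *)

From mathcomp Require Import all_boot.
Set Implicit Arguments. Unset Strict Implicit. Unset Printing Implicit Defensive.

Definition is_loop (T : finType) (op : T -> T -> T) (e : T) : Prop :=
  (forall a, op e a = a /\ op a e = a) /\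
  (forall a b, exists! x, op a x = b) /\
  (forall a b, exists! y, op y a = b).

Definition is_jordan_loop (T : finType) (op : T -> T -> T) (e : T) : Prop :=
  is_loop op e /\
  (forall a b, op a b = op b a) /\
  (forall x y, op (op x x) (op y x) = op (op (op x x) y) x).

Definition lpow (T : Type) (op : T -> T -> T) (e x : T) (k : nat) : T :=
  iter k (op x) e.

Definition is_subloop (T : finType) (op : T -> T -> T) (e : T) (S : {set T}) : Prop :=
  e \in S /\
  (forall a b, a \in S -> b \in S -> op a b \in S) /\
  (forall a b z, a \in S -> b \in S -> op a z = b -> z \in S) /\
  (forall a b z, a \in S -> b \in S -> op z a = b -> z \in S).

(* Membership in the subloop generated by x: y lies in every subloop
   containing x (i.e. in their intersection, which is <x>). *)
Definition in_gen_subloop (T : finType) (op : T -> T -> T) (e x y : T) : Prop :=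
  forall S : {set T}, is_subloop op e S -> x \in S -> y \in S.

(* Let n be the order of left multiplication by x on the orbit of e, so that
   x^0, ..., x^(n-1) are distinct and x^k only depends on k mod n.  In a Jordan
   loop x^2 x^k = x^(k+2) and x^4 x^k = x^(k+4), so for d in {0,1,2,4} left
   multiplication by x^d permutes the powers of x.  If some r is not a power of
   x and n > 4, the four elements x^d r are then distinct and not powers, whence
   n + 4 <= |Q|; with |Q| <= 9 this forces n <= 5.  But for n <= 5 the powers
   are closed under multiplication (the only product not covered by the above,
   x^3 x^3, is x^2 when n = 4 and x^16 when n = 5), so they form a subloop
   containing x, hence all of Q. *)

From mathcomp Require Import all_boot zify.

Set Implicit Arguments.
Unset Strict Implicit.
Unset Printing Implicit Defensive.

Lemma inj_stable_preim (T : finType) (f : T -> T) (S : {set T}) :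
  injective f -> {in S, forall y, f y \in S} -> forall z, f z \in S -> z \in S.
Proof.
move=> f_inj f_S z; have fS_S : f @: S = S.
  apply/eqP; rewrite eqEcard card_imset // leqnn andbT.
  by apply/subsetP=> _ /imsetP[y y_S ->]; apply: f_S.
by rewrite -{1}fS_S mem_imset.
Qed.

Section Loop.

Variables (T : finType) (op : T -> T -> T) (e : T).
Hypothesis loopQ : is_loop op e.

Lemma loop_mul1l a : op e a = a.
Proof. by case: loopQ => /(_ a)[]. Qed.

Lemma loop_mul1r a : op a e = a.
Proof. by case: loopQ => /(_ a)[]. Qed.

Lemma loop_rinj : right_injective op.
Proof.
move=> a y z eq_ay_az; case: loopQ => _ [/(_ a (op a y))[w [_ w_uniq]] _].
by rewrite -(w_uniq y erefl) -(w_uniq z (esym eq_ay_az)).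
Qed.

Lemma loop_linj : left_injective op.
Proof.
move=> a y z eq_ya_za; case: loopQ => _ [_ /(_ a (op y a))[w [_ w_uniq]]].
by rewrite -(w_uniq y erefl) -(w_uniq z (esym eq_ya_za)).
Qed.

Lemma mul_closed_subloop (S : {set T}) :
  e \in S -> {in S &, forall a b, op a b \in S} -> is_subloop op e S.
Proof.
move=> e_S mul_S; split=> //; split; first exact: mul_S.
split=> a b z a_S b_S eq_b.
  apply: (inj_stable_preim (@loop_rinj a)) => [y y_S|]; last by rewrite eq_b.
  exact: mul_S.
apply: (inj_stable_preim (@loop_linj a)) => [y y_S|]; last by rewrite eq_b.
exact: mul_S.
Qed.

Variable x : T.
Local Notation pw := (lpow op e x).
Local Notation n := (order (op x) e).

Definition lpows : {set T} := [set y in orbit (op x) e].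

Lemma lpow1 : pw 1 = x.
Proof. exact: loop_mul1r. Qed.

Lemma lpow_order : pw n = e.
Proof. exact/iter_order/loop_rinj. Qed.

Lemma lpowD_order k : pw (n + k) = pw k.
Proof. by rewrite /lpow addnC iterD; congr iter; apply: lpow_order. Qed.

Lemma lpow_modn k : pw k = pw (k %% n).
Proof.
rewrite {1}(divn_eq k n); elim: (k %/ n) => [|q IHq]; first by rewrite mul0n.
by rewrite mulSn -addnA lpowD_order.
Qed.

Lemma lpow_inj i j : i < n -> j < n -> pw i = pw j -> i = j.
Proof.
move=> lt_in lt_jn eq_ij.
by rewrite -(findex_iter lt_in) -(findex_iter lt_jn); congr findex.
Qed.

Lemma mem_lpows y : reflect (exists2 k, k < n & y = pw k) (y \in lpows).
Proof. by rewrite inE; apply: trajectP. Qed.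

Lemma lpow_in_lpows k : pw k \in lpows.
Proof.
apply/mem_lpows; exists (k %% n); last exact: lpow_modn.
by rewrite ltn_mod order_gt0.
Qed.

Lemma e_in_lpows : e \in lpows.
Proof. exact: (lpow_in_lpows 0). Qed.

Lemma x_in_lpows : x \in lpows.
Proof. by rewrite -lpow1 lpow_in_lpows. Qed.

Lemma card_lpows : #|lpows| = n.
Proof. by rewrite cardsE (card_uniqP (orbit_uniq _ _)) size_orbit. Qed.

End Loop.

Section JordanLoop.

Variables (T : finType) (op : T -> T -> T) (e : T).
Hypothesis jordanQ : is_jordan_loop op e.

Let loopQ : is_loop op e := jordanQ.1.
Let mul1l := loop_mul1l loopQ.
Let mul1r := loop_mul1r loopQ.
Let mulI := loop_rinj loopQ.
Let mulIl := loop_linj loopQ.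

Lemma jordan_mulC : commutative op.
Proof. by case: jordanQ => _ []. Qed.

Lemma jordan_sqr_mulA a y : op (op a a) (op a y) = op a (op (op a a) y).
Proof. by case: jordanQ => _ [mulC jordan]; rewrite (mulC a y) jordan mulC. Qed.

Lemma jordan_sqr_inv a u : op a u = e -> op a (op u u) = u.
Proof.
move=> au_e; case: jordanQ => _ [mulC /(_ u a)].
rewrite au_e mul1r [op (op (op u u) a) u]mulC (mulC _ a).
by move/mulI/esym.
Qed.

Variable x : T.
Local Notation pw := (lpow op e x).
Local Notation n := (order (op x) e).

Lemma lpow2_mul k : op (pw 2) (pw k) = pw (2 + k).
Proof.
have pw2 : pw 2 = op x x by rewrite /lpow /= mul1r.
elim: k => [|k IHk]; first exact: mul1r.
by rewrite [pw k.+1]/= pw2 jordan_sqr_mulA -pw2 IHk addnS.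
Qed.

Lemma lpow4_mul k : op (pw 4) (pw k) = pw (4 + k).
Proof.
have pw4 : pw 4 = op (pw 2) (pw 2) by rewrite lpow2_mul.
suff: op (pw 4) (pw k) = pw (4 + k) /\ op (pw 4) (pw k.+1) = pw (4 + k.+1) by case.
elim: k => [|k [IHk IHk1]].
  by rewrite mul1r (lpow1 loopQ) jordan_mulC.
split=> //; have -> : pw k.+2 = op (pw 2) (pw k) by rewrite lpow2_mul.
by rewrite pw4 jordan_sqr_mulA -pw4 IHk lpow2_mul; congr pw; lia.
Qed.

Lemma lpow8_sqr : op (pw 8) (pw 8) = pw 16.
Proof.
have pw8 : pw 8 = op (pw 4) (pw 4) by rewrite lpow4_mul.
by rewrite {2}pw8 pw8 jordan_sqr_mulA -pw8 (jordan_mulC (pw 8)) !lpow4_mul.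
Qed.

Lemma lpow_mul_small d k : d \in [:: 0; 1; 2; 4] -> op (pw d) (pw k) = pw (d + k).
Proof.
rewrite !inE => /or4P[] /eqP->.
- exact: mul1l.
- by rewrite (lpow1 loopQ) add1n.
- exact: lpow2_mul.
- exact: lpow4_mul.
Qed.

Lemma lpows_mul_closed :
  n <= 5 -> {in lpows op e x &, forall a b, op a b \in lpows op e x}.
Proof.
move=> n_le5 _ _ /mem_lpows[i lt_in ->] /mem_lpows[j lt_jn ->].
have [i_small|i_big] := boolP (i \in [:: 0; 1; 2; 4]).
  by rewrite lpow_mul_small // lpow_in_lpows.
have [j_small|j_big] := boolP (j \in [:: 0; 1; 2; 4]).
  by rewrite jordan_mulC lpow_mul_small // lpow_in_lpows.
have not_small3 k : k < 5 -> k \notin [:: 0; 1; 2; 4] -> k = 3.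
  by case: k => [|[|[|[|[|]]]]].
have i3 : i = 3 by apply: not_small3 => //; lia.
have j3 : j = 3 by apply: not_small3 => //; lia.
rewrite {}j3 {}i3 in lt_in *.
have [n4|n5] : n = 4 \/ n = 5 by lia.
  have x_pw3 : op x (pw 3) = e by move: (lpow_order loopQ x); rewrite n4.
  have -> : op (pw 3) (pw 3) = pw 2 by apply/mulI/(jordan_sqr_inv x_pw3).
  exact: lpow_in_lpows.
have -> : pw 3 = pw 8 by rewrite -(lpowD_order loopQ) n5.
by rewrite lpow8_sqr lpow_in_lpows.
Qed.

Lemma card_lpows_coset r : 4 < n -> r \notin lpows op e x -> n + 4 <= #|T|.
Proof.
move=> n_gt4 r_out; pose coset := [seq op (pw d) r | d <- [:: 0; 1; 2; 4]].
have small_lt_n (d : nat) : d \in [:: 0; 1; 2; 4] -> d < n.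
  by rewrite !inE => /or4P[] /eqP->; lia.
have coset_out : {subset coset <= ~: lpows op e x}.
  move=> _ /mapP[d small_d ->]; rewrite inE; apply: contra r_out.
  case/mem_lpows=> k _ pw_k.
  have : op (pw d) r = op (pw d) (pw (n - d + k)).
    by rewrite lpow_mul_small // addnA subnKC ?lpowD_order // ltnW ?small_lt_n.
  by move/mulI->; apply: lpow_in_lpows.
have coset_uniq : uniq coset.
  apply: map_inj_in_uniq => // d d' small_d small_d' /mulIl eq_pw.
  by apply: lpow_inj eq_pw; apply: small_lt_n.
rewrite -(cardsC (lpows op e x)) card_lpows leq_add2l.
have <- : size coset = 4 by [].
by rewrite -(card_uniqP coset_uniq); apply/subset_leq_card/subsetP.
Qed.

Lemma lpows_setT :
  #|T| <= 9 -> (forall y, in_gen_subloop op e x y) -> lpows op e x = [set: T].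
Proof.
move=> card_le9 gen_x; apply/setP=> y; rewrite in_setT.
have [n_le5|n_gt5] := leqP n 5.
  apply: (gen_x y); last exact: x_in_lpows.
  apply: (mul_closed_subloop loopQ); last exact: lpows_mul_closed.
  exact: e_in_lpows.
apply/negPn/negP=> /card_lpows_coset; lia.
Qed.

End JordanLoop.

Theorem lemma3p7 (T : finType) (op : T -> T -> T) (e x : T) :
  is_jordan_loop op e ->
  #|T| = 9 ->
  (forall y : T, in_gen_subloop op e x y) ->
  (forall y : T, exists k : nat, 1 <= k <= 9 /\ y = lpow op e x k) /\
  (forall n : nat, lpow op e x n = lpow op e x (n %% 9)).
Proof.
move=> jordanQ card9 gen_x; have loopQ := jordanQ.1.
have lpowsT : lpows op e x = [set: T] := lpows_setT jordanQ (eq_leq card9) gen_x.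
have order9 : order (op x) e = 9 by rewrite -card_lpows lpowsT cardsT.
split=> [y|k]; last by rewrite -order9 (lpow_modn loopQ).
have /mem_lpows[[|k] lt_k9 ->] : y \in lpows op e x by rewrite lpowsT.
  by exists 9; split=> //; rewrite -order9 (lpow_order loopQ).
by exists k.+1; rewrite order9 in lt_k9; split=> //; apply: ltnW.
Qed.
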